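(* Let $d\ge2$, $n\ge1$, and let $H$ be a Hermitian operator on $(\mathbb{C}^d)^{\otimes n}$ acting nontrivially only on a $k$-qudit subsystem. Then for every $t\in\mathbb{R}$, the unitary $U_t=e^{-itH}$ satisfies $\mathrm{CiS}[U_t]\le k$.
   Context: Let $V=\mathbb{Z}_d\times\mathbb{Z}_d$; for $a=(s,t)\in V$, $P_a=X^sZ^t$ with $X|j\rangle=|j+1\bmod d\rangle$, $Z|j\rangle=e^{2\pi ij/d}|j\rangle$; $P_{\vec a}=\bigotimes_iP_{a_i}$, $|\vec a|=\#\{i:a_i\ne(0,0)\}$. $\|A\|_2=(d^{-n}\mathrm{Tr}(A^\dagger A))^{1/2}$. For $\|O\|_2=1$, $P_O[\vec a]=d^{-2n}|\mathrm{Tr}(OP_{\vec a})|^2$, $I[O]=\sum_{\vec a}|\vec a|P_O[\vec a]$, and $\mathrm{CiS}[U]=\max_{\|O\|_2=1}|I[UOU^\dagger]-I[O]|$. *)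

From mathcomp Require Import all_boot all_order all_algebra.
From mathcomp Require Import all_classical all_reals all_analysis.
From mathcomp Require Import complex.
Set Implicit Arguments. Unset Strict Implicit. Unset Printing Implicit Defensive.
Import Order.TTheory GRing.Theory Num.Theory numFieldNormedType.Exports.
Local Open Scope ring_scope.
Local Open Scope classical_set_scope.

(* Computational basis of (C^d)^{(x) n}: strings j = (j_1,...,j_n), j_i in Z_d. *)
Definition qbasis (d n : nat) := {ffun 'I_n -> 'I_d}.

(* Operators on (C^d)^{(x) n}, given by their matrix entries <x| A |y>. *)
Definition op (R : realType) (d n : nat) := qbasis d n -> qbasis d n -> R[i].

Definition opmul {R : realType} {d n : nat} (A B : op R d n) : op R d n :=
  fun x y => \sum_(z : qbasis d n) A x z * B z y.
Definition opid {R : realType} {d n : nat} : op R d n :=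
  fun x y => (x == y)%:R.
Definition opadj {R : realType} {d n : nat} (A : op R d n) : op R d n :=
  fun x y => (A y x)^*.
Definition opscale {R : realType} {d n : nat} (c : R[i]) (A : op R d n) : op R d n :=
  fun x y => c * A x y.
Definition optr {R : realType} {d n : nat} (A : op R d n) : R[i] :=
  \sum_(x : qbasis d n) A x x.
Definition oppow {R : realType} {d n : nat} (A : op R d n) (k : nat) : op R d n :=
  iter k (opmul A) opid.

Definition is_hermitian_op {R : realType} {d n : nat} (H : op R d n) : Prop :=
  opadj H = H.

Definition exp_partial {R : realType} {d n : nat} (A : op R d n) (N : nat) : op R d n :=
  fun x y => \sum_(k < N) (k`!%:R)^-1 * oppow A k x y.
Definition opexp {R : realType} {d n : nat} (A : op R d n) : op R d n :=
  fun x y => Complex (limn (fun N => complex.Re (exp_partial A N x y)))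
                     (limn (fun N => complex.Im (exp_partial A N x y))).

Definition omega (R : realType) (d : nat) : R[i] :=
  Complex (cos (2 * pi / d%:R)) (sin (2 * pi / d%:R)).

(* Single-qudit Pauli P_(s,t) = X^s Z^t: X^s Z^t |k> = omega^(t k) |k + s mod d>,
   so <j| X^s Z^t |k> = [j = k + s mod d] omega^(t k). *)
Definition pauli1 (R : realType) (d : nat) (a : 'I_d * 'I_d) (j k : 'I_d) : R[i] :=
  if (nat_of_ord j == (nat_of_ord k + nat_of_ord a.1) %% d)%N
  then omega R d ^+ (nat_of_ord a.2 * nat_of_ord k)%N else 0.

(* P_a = tensor_i P_{a_i}, for a in V^n, V = Z_d x Z_d. *)
Definition pstring (d n : nat) := {ffun 'I_n -> 'I_d * 'I_d}.
Definition pauli (R : realType) {d n : nat} (a : pstring d n) : op R d n :=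
  fun x y => \prod_(i < n) pauli1 R (a i) (x i) (y i).

Definition pweight {d n : nat} (a : pstring d n) : nat :=
  #|[set i : 'I_n | (nat_of_ord (a i).1 != 0%N) || (nat_of_ord (a i).2 != 0%N)]|.

Definition hsnorm {R : realType} {d n : nat} (A : op R d n) : R :=
  Num.sqrt (complex.Re (((d ^ n)%:R)^-1 * optr (opmul (opadj A) A))).

Definition pauli_weight {R : realType} {d n : nat} (O : op R d n) (a : pstring d n) : R :=
  ((d ^ (2 * n))%:R)^-1 * (complex.Re `|optr (opmul O (pauli R a))|) ^+ 2.

Definition influence {R : realType} {d n : nat} (O : op R d n) : R :=
  \sum_(a : pstring d n) (pweight a)%:R * pauli_weight O a.

Definition CiS {R : realType} {d n : nat} (U : op R d n) : R :=
  sup [set r : R | exists O : op R d n, hsnorm O = 1 /\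
         r = `| influence (opmul (opmul U O) (opadj U)) - influence O |].

(* H acts nontrivially only on the qudits in S:  H = h_S (x) Id_{S^c}, i.e.
   <x|H|y> = [x_{S^c} = y_{S^c}] <x_S| h |y_S> for an operator h on the S-qudits
   (represented as a function of the S-coordinates only). *)
Definition acts_only_on {R : realType} {d n : nat} (S : {set 'I_n}) (H : op R d n) : Prop :=
  exists h : op R d n,
    (forall x x' y y' : qbasis d n,
        (forall i, i \in S -> x i = x' i) -> (forall i, i \in S -> y i = y' i) ->
        h x y = h x' y') /\
    (forall x y : qbasis d n,
        H x y = if [forall i, (i \notin S) ==> (x i == y i)] then h x y else 0).


(* Expanding an observable [O] in the Pauli basis, the influence is
   [I[O] = d^-n sum_i (||O||_F^2 - ||T_i O||_F^2)], where [T_i] is the completely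
   depolarizing channel on qudit [i]: [T_i] kills exactly the Pauli strings acting
   nontrivially on [i] (Parseval).  The unitary [U = e^(-itH)] commutes with every
   operator supported outside the support [S] of [H], so [T_i (U O U^†) = U (T_i O) U^†]
   for [i] outside [S], and conjugation by [U] preserves the Frobenius norm: those terms
   of [I[U O U^†] - I[O]] cancel, while each of the [k] remaining ones lies in
   [[-d^-n ||O||_F^2, d^-n ||O||_F^2] = [-1, 1]].  Unitarity of the exponential comes from
   the Cauchy product [e^(-A) e^A = 1] of the entrywise convergent exponential series. *)

From mathcomp Require Import all_boot all_order all_algebra.
From mathcomp Require Import all_classical all_reals all_analysis.
From mathcomp Require Import complex ring lra.
Set Implicit Arguments. Unset Strict Implicit. Unset Printing Implicit Defensive.
Import Order.TTheory GRing.Theory Num.Theory numFieldNormedType.Exports Normc.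
Local Open Scope ring_scope.
Local Open Scope classical_set_scope.

Lemma sum_kronecker_l (K : pzSemiRingType) (I : finType) (x : I) (F : I -> K) :
  \sum_z (x == z)%:R * F z = F x.
Proof.
rewrite (bigD1 x) //= eqxx mul1r big1 ?addr0 // => z.
by rewrite eq_sym => /negbTE ->; rewrite mul0r.
Qed.

Lemma sum_kronecker_r (K : pzSemiRingType) (I : finType) (x : I) (F : I -> K) :
  \sum_z F z * (z == x)%:R = F x.
Proof.
rewrite (bigD1 x) //= eqxx mulr1 big1 ?addr0 // => z.
by move=> /negbTE ->; rewrite mulr0.
Qed.

Lemma prodr_natb (K : comPzSemiRingType) (I : finType) (b : I -> bool) :
  \prod_i (b i)%:R = [forall i, b i]%:R :> K.
Proof.
case: (boolP [forall i, b i]) => [/forallP h|].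
  by rewrite big1 // => i _; rewrite h.
rewrite negb_forall => /existsP [i /negbTE hi].
by rewrite (bigD1 i) //= hi mul0r.
Qed.

Lemma ler_term_sum (K : numDomainType) (I : finType) (F : I -> K) i :
  (forall j, 0 <= F j) -> F i <= \sum_j F j.
Proof. by move=> F_ge0; rewrite (bigD1 i) //= lerDl sumr_ge0. Qed.

Section ComplexModulus.
Variable R : rcfType.
Implicit Types z : R[i].

Lemma normc_ge0 z : 0 <= normc z.
Proof. by case: z => a b; exact: sqrtr_ge0. Qed.

Lemma normcE z : `|z| = (normc z)%:C%C.
Proof. by case: z => a b; rewrite normc_def. Qed.

Lemma normc_real (r : R) : normc r%:C%C = `|r|.
Proof. by rewrite /normc /= expr0n /= addr0 sqrtr_sqr. Qed.

Lemma normc_nat m : normc (m%:R : R[i]) = m%:R.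
Proof. by rewrite -(rmorph_nat (real_complex R)) normc_real ger0_norm. Qed.

Lemma normc_natb (b : bool) : normc (b%:R : R[i]) = b%:R.
Proof. by case: b; rewrite ?normc0 ?normc1. Qed.

Lemma normc_sum (I : Type) (r : seq I) (P : pred I) (F : I -> R[i]) :
  normc (\sum_(i <- r | P i) F i) <= \sum_(i <- r | P i) normc (F i).
Proof.
elim/big_ind2: _ => //; first by rewrite normc0.
by move=> x1 x2 y1 y2 h1 h2; apply: le_trans (le_normcD _ _) (lerD h1 h2).
Qed.

Lemma Re_le_normc z : `|complex.Re z| <= normc z.
Proof. by have := normc_ge_Re z; rewrite normcE lecR. Qed.

Lemma Im_le_normc z : `|complex.Im z| <= normc z.
Proof. by case: z => a b; rewrite /normc /= -sqrtr_sqr ler_wsqrtr // lerDr sqr_ge0. Qed.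

Lemma mulJc_normc z : z^* * z = (normc z ^+ 2)%:C%C.
Proof. by rewrite mulrC -normCK normcE rmorphXn. Qed.

End ComplexModulus.

Section OperatorAlgebra.
Variables (R : realType) (d n : nat).
Local Notation op := (op R d n).
Implicit Types (A B C X : op).

Lemma opmulA A B C : opmul (opmul A B) C = opmul A (opmul B C).
Proof.
apply/funext=> x; apply/funext=> y; rewrite /opmul.
under eq_bigr do rewrite big_distrl /=.
rewrite exchange_big /=; apply: eq_bigr => z _.
by rewrite big_distrr /=; apply: eq_bigr => w _; rewrite mulrA.
Qed.

Lemma opmul1l A : opmul opid A = A.
Proof. by apply/funext=> x; apply/funext=> y; rewrite /opmul /opid sum_kronecker_l. Qed.

Lemma opmul1r A : opmul A opid = A.
Proof. by apply/funext=> x; apply/funext=> y; rewrite /opmul /opid sum_kronecker_r. Qed.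

Lemma optrC A B : optr (opmul A B) = optr (opmul B A).
Proof.
rewrite /optr /opmul exchange_big; apply: eq_bigr => x _.
by apply: eq_bigr => z _; rewrite mulrC.
Qed.

Lemma opadjM A B : opadj (opmul A B) = opmul (opadj B) (opadj A).
Proof.
apply/funext=> x; apply/funext=> y; rewrite /opadj /opmul rmorph_sum.
by apply: eq_bigr => z _; rewrite rmorphM mulrC.
Qed.

Lemma opadjK A : opadj (opadj A) = A.
Proof. by apply/funext=> x; apply/funext=> y; rewrite /opadj conjCK. Qed.

Definition opsum (I : finType) (F : I -> op) : op := fun x y => \sum_i F i x y.

Lemma opmul_sumr (I : finType) A (F : I -> op) :
  opmul A (opsum F) = opsum (fun i => opmul A (F i)).
Proof.
apply/funext=> x; apply/funext=> y; rewrite /opmul /opsum.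
by under eq_bigr do rewrite big_distrr /=; rewrite exchange_big.
Qed.

Lemma opmul_suml (I : finType) (F : I -> op) B :
  opmul (opsum F) B = opsum (fun i => opmul (F i) B).
Proof.
apply/funext=> x; apply/funext=> y; rewrite /opmul /opsum.
by under eq_bigr do rewrite big_distrl /=; rewrite exchange_big.
Qed.

Lemma opmul_scaler A c B : opmul A (opscale c B) = opscale c (opmul A B).
Proof.
apply/funext=> x; apply/funext=> y; rewrite /opmul /opscale big_distrr.
by apply: eq_bigr => z _; rewrite mulrCA.
Qed.

Lemma opmul_scalel c A B : opmul (opscale c A) B = opscale c (opmul A B).
Proof.
apply/funext=> x; apply/funext=> y; rewrite /opmul /opscale big_distrr.
by apply: eq_bigr => z _; rewrite -mulrA.
Qed.

Lemma optr_sum (I : finType) (F : I -> op) : optr (opsum F) = \sum_i optr (F i).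
Proof. by rewrite /optr /opsum exchange_big. Qed.

Lemma optr_scale c A : optr (opscale c A) = c * optr A.
Proof. by rewrite /optr /opscale big_distrr. Qed.

Definition frob A : R := \sum_x \sum_y normc (A x y) ^+ 2.

Lemma frob_ge0 A : 0 <= frob A.
Proof. by apply: sumr_ge0 => x _; apply: sumr_ge0 => y _; apply: sqr_ge0. Qed.

Lemma optr_adjmul A : optr (opmul (opadj A) A) = (frob A)%:C%C.
Proof.
rewrite /optr /opmul /opadj /frob rmorph_sum exchange_big /=.
apply: eq_bigr => x _; rewrite rmorph_sum; apply: eq_bigr => z _.
by rewrite mulJc_normc.
Qed.

Lemma frob_unitary_conj U A : opmul (opadj U) U = opid ->
  frob (opmul (opmul U A) (opadj U)) = frob A.
Proof.
move=> unitU; apply: (@complexI R); rewrite -!optr_adjmul.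
rewrite !opadjM opadjK !opmulA -[opmul (opadj U) (opmul U _)]opmulA unitU opmul1l.
by rewrite optrC !opmulA unitU opmul1r.
Qed.

Lemma hsnorm1_frob A : (0 < d)%N -> hsnorm A = 1 -> frob A = (d ^ n)%:R.
Proof.
move=> d_gt0; have dn_gt0 : (0 : R) < (d ^ n)%:R by rewrite ltr0n expn_gt0 d_gt0.
rewrite /hsnorm optr_adjmul -(rmorph_nat (real_complex R)) -fmorphV -rmorphM /=.
move=> /(congr1 (fun r => r ^+ 2)).
rewrite sqr_sqrtr ?mulr_ge0 ?invr_ge0 ?frob_ge0 ?ltW // expr1n.
by move=> h; rewrite -[frob A](mulVKf (lt0r_neq0 dn_gt0)) h mulr1.
Qed.

End OperatorAlgebra.

Section SiteOperators.
Variables (R : realType) (d n : nat).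
Local Notation T := (qbasis d n).
Local Notation op := (op R d n).
Implicit Types (A B U V X : op) (x y : T).

Definition upd x (i : 'I_n) (c : 'I_d) : T := [ffun j => if j == i then c else x j].

Lemma upd_at x i c : upd x i c i = c.
Proof. by rewrite ffunE eqxx. Qed.

Lemma upd_ne x i c j : j != i -> upd x i c j = x j.
Proof. by rewrite ffunE => /negbTE ->. Qed.

(* The matrix unit |c><c'| on qudit [i], tensored with the identity elsewhere. *)
Definition site_unit i c c' : op := fun x y => ((x == upd y i c) && (y i == c'))%:R.

Lemma site_unit_sym i c c' x y :
  (x == upd y i c) && (y i == c') = (y == upd x i c') && (x i == c).
Proof.
have upd_swap x' y' c1 c2 : x' = upd y' i c1 -> y' i = c2 -> y' = upd x' i c2.
  by move=> -> <-; apply/ffunP => j; rewrite !ffunE; case: (j =P i) => [->|].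
by apply/andP/andP => -[/eqP e /eqP e']; rewrite (upd_swap _ _ _ _ e e') ?e upd_at.
Qed.

Lemma opmul_site_unitE A i c c' x y :
  opmul A (site_unit i c c') x y = (y i == c')%:R * A x (upd y i c).
Proof.
rewrite /opmul /site_unit.
under eq_bigr do rewrite -mulnb natrM mulrA.
by rewrite -big_distrl /= sum_kronecker_r mulrC.
Qed.

Lemma site_unit_opmulE A i c c' x y :
  opmul (site_unit i c c') A x y = (x i == c)%:R * A (upd x i c') y.
Proof.
rewrite /opmul /site_unit.
under eq_bigr do rewrite site_unit_sym -mulnb natrM mulrAC.
rewrite -big_distrl /= mulrC; congr (_ * _).
by under eq_bigr do rewrite eq_sym; rewrite sum_kronecker_l.
Qed.

Lemma opadj_site_unit i c c' : opadj (site_unit i c c') = site_unit i c' c.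
Proof.
by apply/funext=> x; apply/funext=> y; rewrite /opadj /site_unit conjC_nat site_unit_sym.
Qed.

Definition commutes_at i A :=
  forall c c', opmul A (site_unit i c c') = opmul (site_unit i c c') A.

Lemma commutes_atP i A : commutes_at i A <->
  forall c c' x y, (y i == c')%:R * A x (upd y i c) = (x i == c)%:R * A (upd x i c') y.
Proof.
split=> [cA c c' x y|h c c'].
  by rewrite -opmul_site_unitE cA site_unit_opmulE.
by apply/funext=> x; apply/funext=> y; rewrite opmul_site_unitE site_unit_opmulE h.
Qed.

Lemma commutes_at_id i : commutes_at i opid.
Proof. by move=> c c'; rewrite opmul1l opmul1r. Qed.

Lemma commutes_at_mul i A B : commutes_at i A -> commutes_at i B -> commutes_at i (opmul A B).
Proof. by move=> cA cB c c'; rewrite opmulA cB -opmulA cA opmulA. Qed.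

Lemma commutes_at_pow i A k : commutes_at i A -> commutes_at i (oppow A k).
Proof.
move=> cA; elim: k => [|k IH]; first exact: commutes_at_id.
exact: commutes_at_mul.
Qed.

Lemma commutes_at_scale i c A : commutes_at i A -> commutes_at i (opscale c A).
Proof. by move=> cA c1 c2; rewrite opmul_scalel opmul_scaler cA. Qed.

Lemma commutes_at_sum i (I : finType) (F : I -> op) :
  (forall k, commutes_at i (F k)) -> commutes_at i (opsum F).
Proof.
move=> cF c c'; rewrite opmul_suml opmul_sumr; congr opsum.
by apply/funext => k; rewrite cF.
Qed.

Lemma commutes_at_adj i A : commutes_at i A -> commutes_at i (opadj A).
Proof.
move=> h c c'; have := congr1 opadj (h c' c).
by rewrite !opadjM !opadj_site_unit => ->.
Qed.

(* The completely depolarizing channel on qudit [i]: it replaces the [i]-th tensor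
   factor by the normalised identity, i.e. [X |-> Tr_i X (x) I_i / d]. *)
Definition depol i X : op := opscale (d%:R^-1)
  (opsum (fun cc : 'I_d * 'I_d =>
            opmul (opmul (site_unit i cc.1 cc.2) X) (site_unit i cc.2 cc.1))).

Lemma site_unit_conjE i c1 c2 X x y :
  opmul (opmul (site_unit i c1 c2) X) (site_unit i c2 c1) x y =
  (y i == c1)%:R * ((x i == c1)%:R * X (upd x i c2) (upd y i c2)).
Proof. by rewrite opmul_site_unitE site_unit_opmulE. Qed.

Lemma sum_site_unit_conjE i X x y :
  opsum (fun cc : 'I_d * 'I_d =>
           opmul (opmul (site_unit i cc.2 cc.1) X) (site_unit i cc.1 cc.2)) x y
  = (x i == y i)%:R * \sum_c X (upd x i c) (upd y i c).
Proof.
rewrite /opsum; under eq_bigr do rewrite site_unit_conjE.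
rewrite -(pair_big xpredT xpredT (fun c1 c2 =>
   (y i == c2)%:R * ((x i == c2)%:R * X (upd x i c1) (upd y i c1)))) /=.
rewrite big_distrr /=; apply: eq_bigr => c _.
rewrite -(sum_kronecker_l (y i) (fun c2 => (x i == c2)%:R * X (upd x i c) (upd y i c))).
by apply: eq_bigr => c2 _; rewrite mulrA.
Qed.

Lemma depol_swap i X : depol i X = opscale (d%:R^-1)
  (opsum (fun cc : 'I_d * 'I_d =>
            opmul (opmul (site_unit i cc.2 cc.1) X) (site_unit i cc.1 cc.2))).
Proof.
rewrite /depol; congr opscale; apply/funext=> x; apply/funext=> y.
rewrite sum_site_unit_conjE /opsum (reindex_inj (can_inj swap_pairK)) /=.
exact: sum_site_unit_conjE.
Qed.

Lemma depolE i X x y :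
  depol i X x y = d%:R^-1 * ((x i == y i)%:R * \sum_c X (upd x i c) (upd y i c)).
Proof. by rewrite depol_swap {1}/opscale sum_site_unit_conjE. Qed.

Lemma optr_depol_sym i X P : optr (opmul (depol i X) P) = optr (opmul X (depol i P)).
Proof.
rewrite [depol i P]depol_swap /depol opmul_scalel opmul_scaler !optr_scale; congr (_ * _).
rewrite opmul_suml opmul_sumr !optr_sum; apply: eq_bigr => -[c1 c2] _ /=.
by rewrite !opmulA optrC !opmulA.
Qed.

Lemma depol_conj i U V X : commutes_at i U -> commutes_at i V ->
  depol i (opmul (opmul U X) V) = opmul (opmul U (depol i X)) V.
Proof.
move=> cU cV; rewrite /depol opmul_scaler opmul_scalel; congr opscale.
rewrite opmul_sumr opmul_suml; congr opsum; apply/funext => -[c1 c2] /=.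
by rewrite !opmulA cV -[opmul (site_unit i c1 c2) (opmul U _)]opmulA -cU !opmulA.
Qed.

End SiteOperators.

Lemma sum_expr_unity (F : idomainType) (m : nat) (z : F) :
  z ^+ m = 1 -> z != 1 -> \sum_(t < m) z ^+ t = 0.
Proof.
move=> zm1 z_neq1; have := subrX1 z m; rewrite zm1 subrr => /esym/eqP.
by rewrite mulf_eq0 subr_eq0 (negbTE z_neq1) => /eqP.
Qed.

Section RootOfUnity.
Variables (R : realType) (d : nat).
Hypothesis d_gt1 : (1 < d)%N.
Local Notation w := (omega R d).
Let d_gt0 : (0 < d)%N := ltnW d_gt1.

Lemma omega_expr m : w ^+ m =
  Complex (cos (m%:R * (2 * pi / d%:R))) (sin (m%:R * (2 * pi / d%:R))).
Proof.
elim: m => [|m IH]; first by rewrite expr0 mul0r cos0 sin0.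
rewrite exprS IH /omega; set th := 2 * pi / d%:R.
rewrite -natr1 mulrDl mul1r cosD sinD.
by apply/eqP; rewrite eq_complex /=; apply/andP; split; apply/eqP; ring.
Qed.

Lemma omega_prim : d.-primitive_root w.
Proof.
apply/andP; split; first exact: d_gt0.
have dR_neq0 : (d%:R : R) != 0 by rewrite pnatr_eq0 -lt0n d_gt0.
apply/forallP => -[m lt_m_d] /=; rewrite unity_rootE omega_expr.
have [->|m_lt] := eqVneq m.+1 d.
  by rewrite mulrC divfK // mulr_natl cos2pi sin2pi eqxx.
rewrite eq_complex eqbF_neg; apply/negP => /andP[/eqP cos1 _].
pose phi : R := m.+1%:R * pi / d%:R.
have phi_gt0 : 0 < phi by rewrite /phi divr_gt0 ?mulr_gt0 ?ltr0n ?pi_gt0 ?d_gt0.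
have phi_lt_pi : phi < pi.
  rewrite /phi ltr_pdivrMr ?ltr0n ?d_gt0 // [pi * _]mulrC ltr_pM2r ?pi_gt0 //.
  by rewrite ltr_nat ltn_neqAle m_lt lt_m_d.
have sin_gt0 : 0 < sin phi by apply: sin_gt0_pi; rewrite phi_gt0 phi_lt_pi.
have double : m.+1%:R * (2 * pi / d%:R) = phi + phi by rewrite /phi; ring.
move: cos1; rewrite double cosD -!expr2 cos2sin2 /= => cos1.
have : sin phi ^+ 2 = 0 by lra.
by move/eqP; rewrite sqrf_eq0 gt_eqF.
Qed.

Lemma omega_mulJ m : w ^+ m * (w ^+ m)^* = 1.
Proof.
rewrite rmorphXn -exprMn /omega; set c := cos _; set s := sin _.
have h : c ^+ 2 + s ^+ 2 = 1 by rewrite /c /s cos2sin2 subrK.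
suff -> : Complex c s * (Complex c s)^* = 1 by rewrite expr1n.
by apply/eqP; rewrite eq_complex /=; apply/andP; split; apply/eqP; [rewrite -h|]; ring.
Qed.

Lemma sum_omega_expr t : (t < d)%N ->
  \sum_(c < d) (w ^+ t) ^+ c = if t == 0%N then d%:R else 0.
Proof.
move=> t_lt_d; case: eqP => [->|/eqP t_neq0].
  by rewrite expr0 (eq_bigr (fun _ => 1)) ?sumr_const ?card_ord // => c _; rewrite expr1n.
apply: sum_expr_unity; first by rewrite -exprM mulnC exprM (prim_expr_order omega_prim) expr1n.
by rewrite -(expr0 w) (eq_prim_root_expr omega_prim) mod0n modn_small.
Qed.

Lemma sum_shift_mod (k : nat) (F : nat -> R[i]) :
  \sum_(s < d) F ((k + s) %% d)%N = \sum_(u < d) F u.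
Proof.
pose f (s : 'I_d) : 'I_d := Ordinal (ltn_pmod (k + s) d_gt0).
have f_inj : injective f.
  move=> s s' /(congr1 val) /= /eqP; rewrite eqn_modDl !modn_small // => /eqP.
  exact: val_inj.
by rewrite [RHS](reindex_inj f_inj).
Qed.

Lemma pauli1E (v : 'I_d * 'I_d) (j k : 'I_d) :
  pauli1 R v j k = ((j : nat) == (k + v.1) %% d)%N%:R * w ^+ (v.2 * k).
Proof. by rewrite /pauli1; case: ifP => _; rewrite ?mul1r ?mul0r. Qed.

Lemma pauli1_orthogonal (j k j' k' : 'I_d) :
  \sum_(v : 'I_d * 'I_d) pauli1 R v j k * (pauli1 R v j' k')^* =
  d%:R * ((j == j') && (k == k'))%:R.
Proof.
pose r := w ^+ k * (w ^+ k')^*.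
pose A (s : 'I_d) : R[i] :=
  ((j : nat) == (k + s) %% d)%N%:R * ((j' : nat) == (k' + s) %% d)%N%:R.
have e v : pauli1 R v j k * (pauli1 R v j' k')^* = A v.1 * r ^+ v.2.
  rewrite !pauli1E rmorphM rmorph_nat /A /r exprMn -rmorphXn -!exprM.
  by rewrite [(k * _)%N]mulnC [(k' * _)%N]mulnC; ring.
under eq_bigr do rewrite e.
rewrite -(pair_big xpredT xpredT (fun (s t : 'I_d) => A s * r ^+ t)) /=.
under eq_bigr do rewrite -big_distrr /=.
have [ekk|k_neq] := eqVneq k k'.
- subst k'; have -> : \sum_(t < d) r ^+ t = d%:R.
    by rewrite /r omega_mulJ (eq_bigr (fun _ => 1)) ?sumr_const ?card_ord // => *; rewrite expr1n.
  rewrite -big_distrl /= mulrC andbT; congr (_ * _).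
  rewrite (sum_shift_mod k (fun u => ((j : nat) == u)%:R * ((j' : nat) == u)%:R)) /=.
  by have := sum_kronecker_l j (fun u : 'I_d => ((j' : nat) == u)%:R); rewrite /= eq_sym => <-.
- rewrite andbF mulr0; apply: big1 => s _; rewrite sum_expr_unity ?mulr0 //.
    rewrite /r exprMn -rmorphXn -!exprM !(mulnC _ d) !exprM.
    by rewrite !(prim_expr_order omega_prim) !expr1n rmorph1 mulr1.
  apply: contra k_neq => /eqP r1.
  have : w ^+ k = w ^+ k'.
    by rewrite -[RHS]mul1r -r1 /r -mulrA [_^* * _]mulrC omega_mulJ mulr1.
  by move/eqP; rewrite (eq_prim_root_expr omega_prim) !modn_small.
Qed.

Lemma sum_pauli1_diag (v : 'I_d * 'I_d) :
  \sum_(c < d) pauli1 R v c c = d%:R * ((v.1 == 0 :> nat) && (v.2 == 0 :> nat))%:R.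
Proof.
have e c : pauli1 R v c c = (v.1 == 0 :> nat)%:R * (w ^+ v.2) ^+ c.
  rewrite pauli1E -exprM mulnC; congr (_%:R * _).
  rewrite -{1}(modn_small (ltn_ord c)) -{1}[nat_of_ord c]addn0 eqn_modDl.
  by rewrite (modn_small (ltn_ord _)) mod0n eq_sym.
under eq_bigr do rewrite e.
rewrite -big_distrr /= sum_omega_expr //.
by do 2!case: eqP => _ /=; rewrite ?mulr1 ?mulr0 ?mul0r ?mul1r.
Qed.

End RootOfUnity.

Section PauliExpansion.
Variables (R : realType) (d n : nat).
Hypothesis d_gt1 : (1 < d)%N.
Local Notation T := (qbasis d n).
Local Notation op := (op R d n).
Local Notation dn := ((d ^ n)%:R : R).

Lemma dn_gt0 : 0 < dn.
Proof. by rewrite ltr0n expn_gt0 (ltnW d_gt1). Qed.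

Lemma pauli_orthogonal (x y x' y' : T) :
  \sum_(a : pstring d n) pauli R a y x * (pauli R a y' x')^* =
  (d ^ n)%:R * ((y == y') && (x == x'))%:R.
Proof.
rewrite /pauli; under eq_bigr do rewrite rmorph_prod -big_split /=.
rewrite -(bigA_distr_bigA (fun i v => pauli1 R v (y i) (x i) * (pauli1 R v (y' i) (x' i))^*)).
under eq_bigr do rewrite pauli1_orthogonal //.
rewrite big_split /= prodr_const card_ord natrX prodr_natb.
congr (_ * (nat_of_bool _)%:R).
apply/idP/idP => [/forallP h|/andP[/eqP-> /eqP->]]; last by apply/forallP => i; rewrite !eqxx.
by apply/andP; split; apply/eqP/ffunP => i; case/andP: (h i) => /eqP ? /eqP.
Qed.

Definition pcoef (X : op) (a : pstring d n) : R[i] := optr (opmul X (pauli R a)).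

Lemma sum_pauli_pcoef (X : op) (x y : T) :
  \sum_(a : pstring d n) pauli R a y x * (pcoef X a)^* = (d ^ n)%:R * (X x y)^*.
Proof.
rewrite /pcoef /optr /opmul.
under eq_bigr do rewrite rmorph_sum big_distrr /=.
rewrite exchange_big /=.
under eq_bigr do (under eq_bigr do rewrite rmorph_sum big_distrr /=; rewrite exchange_big /=).
under eq_bigr do (under eq_bigr do (under eq_bigr do rewrite rmorphM mulrCA;
  rewrite -big_distrr /= pauli_orthogonal)).
rewrite (bigD1 x) //= [X in _ + X]big1 ?addr0; last first.
  move=> x' /negbTE x'x; apply: big1 => y' _.
  by rewrite [x == _]eq_sym x'x andbF mulr0 mulr0.
rewrite (bigD1 y) //= [X in _ + X]big1 ?addr0; last first.
  by move=> y' /negbTE y'y; rewrite [y == _]eq_sym y'y mulr0 mulr0.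
by rewrite !eqxx mulr1 mulrC.
Qed.

Lemma parseval (X : op) : \sum_(a : pstring d n) normc (pcoef X a) ^+ 2 = dn * frob X.
Proof.
apply: (@complexI R); rewrite rmorph_sum rmorphM rmorph_nat /=.
under eq_bigr do rewrite -mulJc_normc mulrC.
rewrite /frob rmorph_sum /= big_distrr /=.
have -> : \sum_(a : pstring d n) pcoef X a * (pcoef X a)^* =
   \sum_x \sum_y X x y * \sum_(a : pstring d n) pauli R a y x * (pcoef X a)^*.
  under eq_bigr do rewrite {1}/pcoef /optr /opmul big_distrl /=.
  rewrite exchange_big /=; apply: eq_bigr => x _.
  under eq_bigr do rewrite big_distrl /=.
  rewrite exchange_big /=; apply: eq_bigr => y _.
  by rewrite big_distrr /=; apply: eq_bigr => a _; rewrite mulrA.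
apply: eq_bigr => x _; rewrite rmorph_sum big_distrr /=; apply: eq_bigr => y _.
by rewrite sum_pauli_pcoef -mulJc_normc mulrCA [X x y * _]mulrC.
Qed.

Definition trivial_at (a : pstring d n) i : bool :=
  ((a i).1 == 0 :> nat) && ((a i).2 == 0 :> nat).

Lemma pweightE (a : pstring d n) : (pweight a)%:R = \sum_i (~~ trivial_at a i)%:R :> R.
Proof.
rewrite /pweight -sum1_card natr_sum big_mkcond /=; apply: eq_bigr => i _.
by rewrite unfold_in /= asboolb /trivial_at negb_and; case: eqP; case: eqP.
Qed.

Lemma depol_pauli i (a : pstring d n) :
  depol i (pauli R a) = opscale (trivial_at a i)%:R (pauli R a).
Proof.
have pauli_at (x y : T) c : pauli R a (upd x i c) (upd y i c) =
    pauli1 R (a i) c c * \prod_(j | j != i) pauli1 R (a j) (x j) (y j).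
  rewrite /pauli (bigD1 i) //= !upd_at; congr (_ * _).
  by apply: eq_bigr => j ji; rewrite !upd_ne.
apply/funext => x; apply/funext => y; rewrite depolE /opscale.
under eq_bigr do rewrite pauli_at.
rewrite -big_distrl /= sum_pauli1_diag // -/(trivial_at a i).
rewrite [X in _ = _ * X]/pauli [X in _ = _ * X](bigD1 i) //=.
case triv: (trivial_at a i); last by rewrite /= !(mulr0n, mulr0, mul0r).
move: triv => /andP[/eqP a1 /eqP a2].
rewrite pauli1E // a1 a2 addn0 mul0n expr0 mulr1 modn_small //.
have dC_neq0 : (d%:R : R[i]) != 0 by rewrite pnatr_eq0 -lt0n (ltnW d_gt1).
by field.
Qed.

Lemma normc_pcoef_depol (X : op) i a :
  normc (pcoef (depol i X) a) ^+ 2 = (trivial_at a i)%:R * normc (pcoef X a) ^+ 2.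
Proof.
rewrite /pcoef optr_depol_sym depol_pauli opmul_scaler optr_scale.
by rewrite normcM normc_natb exprMn; case: (trivial_at a i); rewrite ?expr1n ?expr0n.
Qed.

(* The [i]-th term collects the Pauli weight of [X] on the strings acting
   nontrivially on qudit [i]. *)
Lemma influence_depol (X : op) :
  influence X = dn^-1 * \sum_i (frob X - frob (depol i X)).
Proof.
rewrite /influence.
transitivity (((d ^ (2 * n))%:R)^-1 *
   \sum_i \sum_(a : pstring d n) (~~ trivial_at a i)%:R * normc (pcoef X a) ^+ 2).
  rewrite exchange_big big_distrr /=; apply: eq_bigr => a _.
  by rewrite /pauli_weight normcE pweightE mulrCA -big_distrl.
have e i : \sum_(a : pstring d n) (~~ trivial_at a i)%:R * normc (pcoef X a) ^+ 2 =
           dn * (frob X - frob (depol i X)).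
  rewrite mulrBr -!parseval -sumrB; apply: eq_bigr => a _.
  by rewrite normc_pcoef_depol; case: (trivial_at a i); rewrite ?mul0r ?mul1r ?subrr ?subr0.
under eq_bigr do rewrite e.
rewrite -big_distrr /= mulrA; congr (_ * _).
have dn_neq0 := lt0r_neq0 dn_gt0.
by rewrite mulnC expnM natrX; field.
Qed.

Lemma frob_depol_le (X : op) i : frob (depol i X) <= frob X.
Proof.
rewrite -(ler_pM2l dn_gt0) -!parseval; apply: ler_sum => a _.
by rewrite normc_pcoef_depol; case: (trivial_at a i); rewrite ?mul1r ?mul0r ?sqr_ge0.
Qed.

(* Outside [S] the depolarizing terms of [X] and [U X U^†] agree; inside [S] each
   difference lies in [[-||X||_F^2, ||X||_F^2]]. *)
Lemma influence_unitary_conj_le (S : {set 'I_n}) (U X : op) :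
  opmul (opadj U) U = opid -> (forall i, i \notin S -> commutes_at i U) ->
  frob X = dn ->
  `|influence (opmul (opmul U X) (opadj U)) - influence X| <= #|S|%:R.
Proof.
move=> unitU locU frobX; set Y := opmul (opmul U X) (opadj U).
have frobY : frob Y = frob X by rewrite frob_unitary_conj.
have dnV_ge0 : 0 <= dn^-1 by rewrite invr_ge0 ltW // dn_gt0.
rewrite !influence_depol frobY -mulrBr -sumrB normrM (ger0_norm dnV_ge0).
apply: (@le_trans _ _ (dn^-1 * \sum_i (if i \in S then frob X else 0))).
  rewrite ler_wpM2l //; apply: le_trans (ler_norm_sum _ _ _) _; apply: ler_sum => i _.
  case: ifP => iS.
    have := frob_depol_le X i; have := frob_depol_le Y i.
    have := frob_ge0 (depol i X); have := frob_ge0 (depol i Y).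
    by rewrite frobY ler_norml; lra.
  have locUi : commutes_at i U by apply: locU; rewrite iS.
  have depolY : depol i Y = opmul (opmul U (depol i X)) (opadj U).
    by rewrite depol_conj //; exact: commutes_at_adj.
  by rewrite depolY frob_unitary_conj // subrr normr0.
by rewrite -big_mkcond /= sumr_const frobX mulrnAr mulVf // lt0r_neq0 // dn_gt0.
Qed.

End PauliExpansion.

Section ComplexConvergence.
Variable R : realType.
Implicit Types (u v : nat -> R[i]) (z w : R[i]).

Local Notation Re := (@complex.Re R : Rcomplex R -> R).
Local Notation Im := (@complex.Im R : Rcomplex R -> R).

Definition ccvg u z := (Re \o u) @ \oo --> Re z /\ (Im \o u) @ \oo --> Im z.

Lemma ccvg_uniq u z w : ccvg u z -> ccvg u w -> z = w.
Proof.
move=> [Re_z Im_z] [Re_w Im_w]; apply/eqP; rewrite eq_complex.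
by apply/andP; split; apply/eqP; [exact: (cvg_unique _ Re_z Re_w)|exact: (cvg_unique _ Im_z Im_w)].
Qed.

Lemma ccvg_cst z : ccvg (fun _ => z) z.
Proof. by split; apply: cvg_cst. Qed.

Lemma ccvgD u v z w : ccvg u z -> ccvg v w -> ccvg (fun N => u N + v N) (z + w).
Proof.
by move=> [? ?] [? ?]; split; rewrite /comp raddfD; under eq_fun do rewrite raddfD; apply: cvgD.
Qed.

Lemma ccvgM u v z w : ccvg u z -> ccvg v w -> ccvg (fun N => u N * v N) (z * w).
Proof.
have ReM z' w' : Re (z' * w') = Re z' * Re w' - Im z' * Im w' by case: z' w' => ? ? [].
have ImM z' w' : Im (z' * w') = Re z' * Im w' + Im z' * Re w'.
  by case: z' w' => ? ? [] * /=; rewrite addrC.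
move=> [? ?] [? ?]; split; rewrite /comp ?ReM ?ImM /=.
  by under eq_fun do rewrite ReM; apply: cvgB; apply: cvgM.
by under eq_fun do rewrite ImM; apply: cvgD; apply: cvgM.
Qed.

Lemma ccvgJ u z : ccvg u z -> ccvg (fun N => (u N)^*) z^*.
Proof.
have ReJ w : Re w^* = Re w by case: w.
have ImJ w : Im w^* = - Im w by case: w.
move=> [? ?]; split; rewrite /comp ?ReJ ?ImJ.
  by under eq_fun do rewrite ReJ.
by under eq_fun do rewrite ImJ; apply: cvgN.
Qed.

Lemma ccvg_sum (I : Type) (r : seq I) (u : I -> nat -> R[i]) (z : I -> R[i]) :
  (forall i, ccvg (u i) (z i)) -> ccvg (fun N => \sum_(i <- r) u i N) (\sum_(i <- r) z i).
Proof.
move=> cvg_u; elim: r => [|i r IH].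
  by under eq_fun do rewrite big_nil; rewrite big_nil; exact: ccvg_cst.
by under eq_fun do rewrite big_cons; rewrite big_cons; exact: ccvgD.
Qed.

Lemma ccvg_normc_le u z (e : nat -> R) :
  (\forall N \near \oo, normc (u N - z) <= e N) -> e @ \oo --> 0 -> ccvg u z.
Proof.
move=> near_le /cvgrPdist_lt cvg_e.
have dist_lt (f : R[i] -> R) : (forall w, `|f w| <= normc w) ->
    (forall w w', f (w - w') = f w - f w') -> (f \o u) @ \oo --> f z.
  move=> f_le fB; apply/cvgrPdist_lt => eps eps_gt0.
  apply: filterS2 near_le (cvg_e _ eps_gt0) => N le_e; rewrite sub0r normrN => e_lt.
  rewrite distrC /comp -fB; apply: le_lt_trans (f_le _) _.
  exact: le_lt_trans le_e (le_lt_trans (ler_norm _) e_lt).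
by split; apply: dist_lt => *; rewrite ?Re_le_normc ?Im_le_normc ?raddfB.
Qed.

End ComplexConvergence.

Section TriangularSums.
Variable V : zmodType.
Implicit Types f : nat -> nat -> V.

Definition trisum N f := \sum_(0 <= j < N) \sum_(0 <= k < N - j) f j k.
Definition trirest N f := \sum_(0 <= j < N) \sum_(N - j <= k < N) f j k.

Lemma square_sum_split N f :
  \sum_(0 <= j < N) \sum_(0 <= k < N) f j k = trisum N f + trirest N f.
Proof.
rewrite /trisum /trirest -big_split /=; apply: eq_big_nat => j /andP[_ jN].
by rewrite -big_cat_nat // leq_subr.
Qed.

Lemma trisum_diag N f :
  trisum N f = \sum_(0 <= m < N) \sum_(0 <= j < m.+1) f j (m - j)%N.
Proof.
elim: N => [|N IH]; first by rewrite /trisum !big_geq.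
rewrite big_nat_recr //= -IH /trisum big_nat_recr //= subSnn big_nat1.
rewrite [in RHS]big_nat_recr //= subnn addrA; congr (_ + _); rewrite -big_split /=.
apply: eq_big_nat => j /andP[_ jN].
by rewrite subSn ?(ltnW jN) // big_nat_recr.
Qed.

End TriangularSums.

Lemma normc_trirest_le (R : rcfType) N (f : nat -> nat -> R[i]) (g : nat -> nat -> R) :
  (forall j k, normc (f j k) <= g j k) -> normc (trirest N f) <= trirest N g.
Proof.
move=> f_le; apply: le_trans (normc_sum _ _ _) _; apply: ler_sum => j _.
by apply: le_trans (normc_sum _ _ _) _; apply: ler_sum => k _.
Qed.

Lemma sum_exp_coeff_convolution (F : numFieldType) (x y : F) m :
  \sum_(0 <= j < m.+1) (x ^+ j / j`!%:R) * (y ^+ (m - j) / (m - j)`!%:R)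
  = (x + y) ^+ m / m`!%:R.
Proof.
have fact_neq0 k : (k`!%:R : F) != 0 by rewrite pnatr_eq0 -lt0n fact_gt0.
rewrite addrC exprDn big_distrl big_mkord /=; apply: eq_bigr => j _.
have jm : (j <= m)%N by rewrite -ltnS.
have binomE : ('C(m, j)%:R : F) = m`!%:R / (j`!%:R * (m - j)`!%:R).
  by rewrite -(bin_fact jm) !natrM mulfK // mulf_neq0.
rewrite -[_ *+ 'C(m, j)]mulr_natr binomE.
by field; rewrite !fact_neq0.
Qed.

Section OperatorPowers.
Variables (R : realType) (d n : nat).
Local Notation op := (op R d n).
Implicit Types (A B : op).

Lemma oppowD A j k : oppow A (j + k) = opmul (oppow A j) (oppow A k).
Proof.
elim: j => [|j IH]; first by rewrite opmul1l.
by rewrite addSn /oppow !iterS -!/(oppow _ _) IH opmulA.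
Qed.

Lemma oppowSr A k : oppow A k.+1 = opmul (oppow A k) A.
Proof. by rewrite -addn1 oppowD /oppow /= opmul1r. Qed.

Lemma opadj_id : opadj (@opid R d n) = opid.
Proof. by apply/funext=> x; apply/funext=> y; rewrite /opadj /opid conjC_nat eq_sym. Qed.

Lemma opadj_oppow A k : opadj (oppow A k) = oppow (opadj A) k.
Proof.
elim: k => [|k IH]; first exact: opadj_id.
by rewrite /oppow iterS -/(oppow _ _) opadjM IH -oppowSr.
Qed.

Lemma opscaleA c c' A : opscale c (opscale c' A) = opscale (c * c') A.
Proof. by apply/funext=> x; apply/funext=> y; rewrite /opscale mulrA. Qed.

Lemma oppow_scale c A k : oppow (opscale c A) k = opscale (c ^+ k) (oppow A k).
Proof.
elim: k => [|k IH].
  by apply/funext=> x; apply/funext=> y; rewrite /opscale expr0 mul1r.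
by rewrite /oppow !iterS -!/(oppow _ _) IH opmul_scaler opmul_scalel opscaleA exprSr.
Qed.

Lemma exp_partialE A N :
  exp_partial A N = opsum (fun k : 'I_N => opscale (k`!%:R)^-1 (oppow A k)).
Proof. by []. Qed.

Lemma opadj_exp_partial A N : opadj (exp_partial A N) = exp_partial (opadj A) N.
Proof.
apply/funext=> x; apply/funext=> y; rewrite /opadj /exp_partial rmorph_sum.
by apply: eq_bigr => k _; rewrite rmorphM fmorphV rmorph_nat -opadj_oppow.
Qed.

Definition opnorm1 A : R := \sum_x \sum_y normc (A x y).

Lemma opnorm1_ge0 A : 0 <= opnorm1 A.
Proof. by apply: sumr_ge0 => x _; apply: sumr_ge0 => y _; apply: normc_ge0. Qed.

Lemma normc_le_opnorm1 A x y : normc (A x y) <= opnorm1 A.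
Proof.
have row_ge0 x' : 0 <= \sum_y' normc (A x' y') by apply: sumr_ge0 => *; apply: normc_ge0.
apply: le_trans (ler_term_sum x row_ge0).
by apply: ler_term_sum => y'; apply: normc_ge0.
Qed.

Lemma opnorm1_mul A B : opnorm1 (opmul A B) <= opnorm1 A * opnorm1 B.
Proof.
rewrite /opnorm1 big_distrl /=; apply: ler_sum => x _.
apply: (@le_trans _ _ (\sum_y \sum_z normc (A x z) * normc (B z y))).
  apply: ler_sum => y _; apply: le_trans (normc_sum _ _ _) _.
  by apply: ler_sum => z _; rewrite normcM.
rewrite exchange_big big_distrl /=; apply: ler_sum => z _.
rewrite -big_distrr /= ler_wpM2l ?normc_ge0 //.
apply: ler_term_sum => z'.
by apply: sumr_ge0 => *; apply: normc_ge0.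
Qed.

Lemma normc_oppow_le A k x y :
  normc (oppow A k x y) <= opnorm1 (@opid R d n) * opnorm1 A ^+ k.
Proof.
apply: le_trans (normc_le_opnorm1 _ _ _) _; elim: k => [|k IH]; first by rewrite mulr1.
rewrite /oppow iterS -/(oppow _ _); apply: le_trans (opnorm1_mul _ _) _.
by rewrite exprS mulrCA ler_wpM2l ?opnorm1_ge0.
Qed.

End OperatorPowers.

Lemma is_cvg_series_le_exp_coeff (R : realType) (u : nat -> R) (C r : R) :
  0 <= C -> 0 <= r -> (forall k, `|u k| <= C * exp_coeff r k) -> cvgn (series u).
Proof.
move=> C_ge0 r_ge0 u_le; apply: normed_cvg.
apply: (@series_le_cvg _ _ (fun k => C * exp_coeff r k)) => [k|k|//|].
- exact: normr_ge0.
- by rewrite mulr_ge0 // /exp_coeff /= divr_ge0 ?exprn_ge0 ?ler0n.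
- exact: (is_cvg_seriesZ (k := C) (is_cvg_series_exp_coeff r)).
Qed.

Section ExpCoeffSquare.
Variables (R : realType) (r : R).
Local Notation g := (fun j k => exp_coeff r j * exp_coeff r k).

Lemma trirest_exp_coeff N :
  trirest N g = series (exp_coeff r) N ^+ 2 - series (exp_coeff (r + r)) N.
Proof.
have tri : trisum N g = series (exp_coeff (r + r)) N.
  rewrite trisum_diag /series /=; apply: eq_bigr => m _.
  exact: sum_exp_coeff_convolution.
rewrite -tri expr2 {1 2}/series /= big_distrl /=.
under eq_bigr do rewrite big_distrr /=.
by rewrite square_sum_split addrC addKr.
Qed.

(* The limit is [expR r ^+ 2 - expR (r + r) = 0]. *)
Lemma trirest_exp_coeff_cvg0 : (fun N => trirest N g) @ \oo --> 0.
Proof.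
under eq_fun do rewrite trirest_exp_coeff expr2.
rewrite -(subrr (expR (r + r))) [X in X - _]expRD.
apply: cvgB; last exact: is_cvg_series_exp_coeff.
by apply: cvgM; exact: is_cvg_series_exp_coeff.
Qed.

End ExpCoeffSquare.

Section OperatorExponential.
Variables (R : realType) (d n : nat).
Local Notation op := (op R d n).
Implicit Types (A : op).

Lemma opexp_ccvg A x y : ccvg (fun N => exp_partial A N x y) (opexp A x y).
Proof.
pose a k := (k`!%:R)^-1 * oppow A k x y.
have a_le k : normc (a k) <= opnorm1 (@opid R d n) * exp_coeff (opnorm1 A) k.
  rewrite normcM normcV normc_nat.
  by rewrite exp_coeffE mulrCA ler_wpM2l ?invr_ge0 ?normc_oppow_le.
have C_ge0 := opnorm1_ge0 (@opid R d n); have r_ge0 := opnorm1_ge0 A.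
have cvg_series (f : R[i] -> R) : (forall z w, f (z + w) = f z + f w) -> f 0 = 0 ->
    (forall z, `|f z| <= normc z) -> cvgn (fun N => f (exp_partial A N x y)).
  move=> fD f0 f_le.
  have -> : (fun N => f (exp_partial A N x y)) = series (f \o a).
    apply/funext => N; rewrite /exp_partial /series /= big_mkord.
    by elim/big_rec2: _ => [|k z w _ <-]; rewrite ?f0 ?fD.
  apply: is_cvg_series_le_exp_coeff C_ge0 r_ge0 _ => k.
  exact: le_trans (f_le _) (a_le k).
by split; apply: cvg_series => *; rewrite ?raddfD ?raddf0 ?Re_le_normc ?Im_le_normc.
Qed.

Lemma exp_partial_opp_mul_ccvg A x y :
  ccvg (fun N => opmul (exp_partial (opscale (-1) A) N) (exp_partial A N) x y) (opid x y).
Proof.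
pose f j k := ((-1) ^+ j / j`!%:R) * (1 ^+ k / k`!%:R) * oppow A (j + k) x y.
pose C := opnorm1 (@opid R d n); pose r := opnorm1 A.
have expand N : opmul (exp_partial (opscale (-1) A) N) (exp_partial A N) x y =
    \sum_(0 <= j < N) \sum_(0 <= k < N) f j k.
  rewrite !exp_partialE opmul_suml /opsum big_mkord; apply: eq_bigr => j _.
  rewrite opmul_sumr big_mkord; apply: eq_bigr => k _.
  rewrite oppow_scale opmul_scaler !opmul_scalel /opscale -oppowD /f expr1n.
  by rewrite !mulrA [_ * (-1) ^+ j]mulrC !mulrA mulr1; congr (_ * _); exact: mulrAC.
have diag m : \sum_(0 <= j < m.+1) f j (m - j)%N = (0 ^+ m / m`!%:R) * oppow A m x y.
  rewrite -[0 ^+ m](congr1 (fun z => z ^+ m) (addNr (1 : R[i]))).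
  rewrite -sum_exp_coeff_convolution big_distrl /=.
  by apply: eq_big_nat => j /andP[_ jm]; rewrite /f subnKC // -ltnS.
have trisum_f N : (0 < N)%N -> trisum N f = opid x y.
  case: N => // N _; rewrite trisum_diag (eq_big_nat _ _ (fun m _ => diag m)).
  rewrite big_nat_recl // big1 => [|m _]; last by rewrite expr0n mul0r mul0r.
  by rewrite fact0 expr0 divr1 mul1r addr0.
have normc_f j k : normc (f j k) <= C * (exp_coeff r j * exp_coeff r k).
  have normc_sign : normc ((-1) ^+ j : R[i]) = 1.
    by elim: j => [|j IH]; rewrite ?expr0 ?exprS ?normcM ?normcN ?IH normc1 ?mulr1.
  rewrite !normcM normc_sign !normcV !normc_nat expr1n normc1 !exp_coeffE /= !div1r.
  have -> : C * ((j`!%:R)^-1 * r ^+ j * ((k`!%:R)^-1 * r ^+ k)) =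
      (j`!%:R)^-1 * (k`!%:R)^-1 * (C * r ^+ (j + k)) by rewrite exprD; ring.
  by rewrite ler_wpM2l ?mulr_ge0 ?invr_ge0 ?normc_oppow_le.
apply: (ccvg_normc_le (e := fun N => C * trirest N (fun j k => exp_coeff r j * exp_coeff r k))).
  near=> N; have N_gt0 : (0 < N)%N by near: N; exists 1%N.
  rewrite expand square_sum_split trisum_f // addrAC subrr add0r.
  rewrite /trirest big_distrr; under eq_bigr do rewrite big_distrr.
  exact: (normc_trirest_le N normc_f).
rewrite -(mulr0 C); apply: cvgM; [exact: cvg_cst | exact: trirest_exp_coeff_cvg0].
Unshelve. all: by end_near.
Qed.

Lemma opexp_unitary A : opadj A = opscale (-1) A -> opmul (opadj (opexp A)) (opexp A) = opid.
Proof.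
move=> antiA; apply/funext => x; apply/funext => y.
apply: ccvg_uniq (exp_partial_opp_mul_ccvg A x y).
rewrite -antiA; under eq_fun do rewrite -opadj_exp_partial.
by apply: ccvg_sum => z; apply: ccvgM; [apply: ccvgJ|]; apply: opexp_ccvg.
Qed.

Lemma commutes_at_opexp i A : commutes_at i A -> commutes_at i (opexp A).
Proof.
move=> cA; have cS N : commutes_at i (exp_partial A N).
  by apply: commutes_at_sum => k; apply/commutes_at_scale/commutes_at_pow.
apply/commutes_atP => c c' x y.
apply: (@ccvg_uniq _ (fun N => (y i == c')%:R * exp_partial A N x (upd y i c))).
  exact: ccvgM (ccvg_cst _) (opexp_ccvg _ _ _).
under eq_fun do rewrite ((commutes_atP _ _).1 (cS _)).
exact: ccvgM (ccvg_cst _) (opexp_ccvg _ _ _).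
Qed.

End OperatorExponential.

Lemma acts_only_on_commutes_at (R : realType) (d n : nat) (S : {set 'I_n}) (H : op R d n) i :
  acts_only_on S H -> i \notin S -> commutes_at i H.
Proof.
case=> h [h_local Hh] iS; apply/commutes_atP => c c' x y; rewrite !Hh.
have upd_S (x' : qbasis d n) c1 j : j \in S -> upd x' i c1 j = x' j.
  by move=> jS; rewrite upd_ne //; apply: contraTneq jS => ->.
have -> : h x (upd y i c) = h x y by apply: h_local => // j /upd_S.
have -> : h (upd x i c') y = h x y by apply: h_local => // j /upd_S.
have [yi|yi] := eqVneq (y i) c'; have [xi|xi] := eqVneq (x i) c; rewrite ?mul1r ?mul0r //.
- congr (if _ then _ else _); apply/forallP/forallP => outS j; have := outS j;
    by case: (eqVneq j i) => [->|ji]; rewrite ?upd_at ?xi ?yi ?eqxx ?implybT ?upd_ne.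
- by case: ifP => // /forallP /(_ i); rewrite iS upd_at /= (negbTE xi).
- by case: ifP => // /forallP /(_ i); rewrite iS upd_at /= eq_sym (negbTE yi).
Qed.

Lemma opadj_scale_i_hermitian (R : realType) (d n : nat) (H : op R d n) (t : R) :
  is_hermitian_op H ->
  opadj (opscale (Complex 0 (- t)) H) = opscale (-1) (opscale (Complex 0 (- t)) H).
Proof.
move=> hermH; apply/funext => x; apply/funext => y.
rewrite /opadj /opscale rmorphM /= -[(H y x)^*]/(opadj H x y) hermH mulrA.
by congr (_ * _); apply/eqP; rewrite eq_complex /=; apply/andP; split; apply/eqP; ring.
Qed.

Lemma sup_le_ub (R : realType) (E : set R) (k : R) : 0 <= k -> ubound E k -> sup E <= k.
Proof.
move=> k_ge0 ubE; have [->|/set0P E_neq0] := eqVneq E set0; first by rewrite sup0.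
exact: ge_sup.
Qed.

Theorem mainTheorem10 (R : realType) (d n k : nat) (H : op R d n) :
  (2 <= d)%N -> (1 <= n)%N ->
  is_hermitian_op H ->
  (exists S : {set 'I_n}, #|S| = k /\ acts_only_on S H) ->
  (* U_t = e^{-itH}; Complex 0 (-t) = -i t *)
  forall t : R, CiS (opexp (opscale (Complex 0 (- t)) H)) <= k%:R.
Proof.
move=> d_gt1 _ hermH [S [<- locH]] t.
have unitU := opexp_unitary (opadj_scale_i_hermitian t hermH).
have locU i : i \notin S -> commutes_at i (opexp (opscale (Complex 0 (- t)) H)).
  by move=> iS; apply/commutes_at_opexp/commutes_at_scale; exact: acts_only_on_commutes_at iS.
apply: sup_le_ub => // _ [X [normX ->]].
have frobX := hsnorm1_frob (ltnW d_gt1) normX.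
exact: (influence_unitary_conj_le d_gt1 unitU locU frobX).
Qed.
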